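(* Let $F:(\mathcal{D},\mathcal{S},\beta)\to(\mathcal{D}',\mathcal{S}',\beta')$ be a strict morphism of liability categories, and let $N=(G,X,\lambda,\iota;\delta,\hat\alpha)$ be a liability network in $\mathcal{D}$, $G=(V,E,s,t)$, with liability sheaf $\mathcal{L}$. Let $\tau:1'\xrightarrow{\sim}F1$ be the canonical isomorphism. Define the pushforward network $F_*N=(G,FX,F_*\lambda,F_*\iota;F_*\delta,F_*\hat\alpha)$ by $(FX)_v=FX_v$, $(F_*\lambda)_e=F\lambda_e\circ\tau$, $(F_*\iota)_v=F\iota_v\circ\tau$, $(F_*\delta)_e=\phi_{X_{s(e)},\lambda_e}\circ F\delta_e$, and $(F_*\hat\alpha)_v=F\hat\alpha_v\circ\kappa_v^{-1}\circ(\mathrm{id}_{FX_v}\times\psi_v^{-1})$, where $\kappa_v:F(X_v\times\prod_{t(e)=v}X_{s(e)}^{\lambda_e})\xrightarrow{\sim}FX_v\times F\prod_{t(e)=v}X_{s(e)}^{\lambda_e}$ is the canonical binary product comparison and $\psi_v:F\prod_{t(e)=v}X_{s(e)}^{\lambda_e}\xrightarrow{\sim}\prod_{t(e)=v}(FX_{s(e)})^{(F_*\lambda)_e}$ is the canonical isomorphism assembled from finite-limit preservation of $F$ and the strict comparisons $\phi_{X_{s(e)},\lambda_e}$. Then $F_*N$ is a liability network in $\mathcal{D}'$. Moreover, letting $\mathcal{L}'$ be the liability sheaf of $F_*N$, $P'=\prod_{v\in V}FX_v$, $\Phi'$ the clearing operator of $F_*N$, $\Phi$ that of $N$ on $P=\prod_vX_v$,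 and $\chi_P:F(\prod_vX_v)\xrightarrow{\sim}P'$ the canonical product comparison, there is a canonical isomorphism in $\mathcal{D}'$ \[ F\bigl(H^0(\mathcal{H}_G;\mathcal{L})\bigr)\cong H^0(\mathcal{H}_G;\mathcal{L}'), \] under which the clearing operators correspond: $\Phi'\circ\chi_P=\chi_P\circ F\Phi$.
   Context: A liability category $(\mathcal{D},\mathcal{S},\beta)$ is a category $\mathcal{D}$ with: (1) a terminal object $1$, finite products and equalizers; (2) a partial order on each $\mathrm{Hom}(1,P)$ such that postcomposition with any morphism is order-preserving; (3) for each $P$ a class $\mathcal{S}_P$ of monomorphisms $P^c\hookrightarrow P$ (one representative per subobject class), stable under (chosen) pullback; (4) bound selectors $\beta_P:\mathrm{Hom}(1,P)\to\mathcal{S}_P$; (5) $\mathrm{Hom}(1,\prod_iP_i)\to\prod_i\mathrm{Hom}(1,P_i)$ is an order isomorphism (componentwise order) for finite families. For $\rho:1\to P$ write $P^{\rho}$ for the domain of $\beta_P(\rho)$. A morphism of liability categories $F:(\mathcal{D},\mathcal{S},\beta)\to(\mathcal{D}',\mathcal{S}',\beta')$ consists of a finite-limit-preserving functor $F:\mathcal{D}\to\mathcal{D}'$ together with, for each object $X$ and global element $\rho:1\to X$, a monomorphism $\phi_{X,\rho}:F(\beta_X(\rho))\hookrightarrow\beta'_{FX}(F\rho\circ\tau)$ over $FX$ (here $\tau:1'\cong F1$ is the canonical isomorphism). It is strict if every $\phi_{X,\rho}$ is an isomorphism. A liability network in $\mathcal{D}$ is $N=(G,X,\lambda,\iota;\delta,\hat\alpha)$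 with $G=(V,E,s,t)$ a finite directed graph, payment objects $X_v$, liability morphisms $\lambda_e:1\to X_{s(e)}$, exogenous resources $\iota_v:1\to X_v$, distributors $\delta_e:X_{s(e)}\to X_{s(e)}^{\lambda_e}$, and aggregators $\hat\alpha_v:X_v\times\prod_{t(e)=v}X_{s(e)}^{\lambda_e}\to X_v$; the partial aggregator is $\alpha_v=\hat\alpha_v\circ(\iota_v\times\mathrm{id})$, empty products being terminal. The liability hypergraph $\mathcal{H}_G$ has vertices $V\sqcup\{e^*:e\in E\}$ and hyperedges $h_v^\delta$ (source $\{v\}$, target $\{e^*:s(e)=v\}$), $h_v^\alpha$ (empty source, target $\{e^*:t(e)=v\}\cup\{v\}$); the incidence category $\mathcal{I}(\mathcal{H}_G)$ has one non-identity morphism $h\to w$ per incidence and no other composites. The liability sheaf $\mathcal{L}:\mathcal{I}(\mathcal{H}_G)\to\mathcal{D}$ has stalks $X_v$ at $v$ and $h_v^\delta$, $X_{s(e)}^{\lambda_e}$ at $e^*$, $\prod_{t(e)=v}X_{s(e)}^{\lambda_e}$ at $h_v^\alpha$, with restrictions $\mathrm{id}$, $\delta_e$, projections $\pi_e$, $\alpha_v$ on $h_v^\delta\to v$, $h_v^\delta\to e^*$, $h_v^\alpha\to e^*$, $h_v^\alpha\to v$. $H^0(\mathcal{H}_G;\mathcal{L})=\lim_{\mathcal{I}(\mathcal{H}_G)}\mathcal{L}$. The clearing operator of $N$ is $\Phi=A\circ D:P\to P$ where $P=\prod_vX_v$, $B=\prod_eX_{s(e)}^{\lambda_e}$, $D:P\to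 B$ has components $\delta_e\circ\pi_{s(e)}$ and $A:B\to P$ has components $\alpha_v\circ\langle\pi_e\rangle_{t(e)=v}$. *)

From HB Require Import structures.
From mathcomp Require Import all_boot.

Set Implicit Arguments.
Unset Strict Implicit.
Unset Printing Implicit Defensive.

Record Cat := {
  Ob :> Type;
  Hom : Ob -> Ob -> Type;
  idm : forall X, Hom X X;
  cmp : forall X Y Z, Hom Y Z -> Hom X Y -> Hom X Z;
  cmp_id_l : forall X Y (f : Hom X Y), cmp (idm Y) f = f;
  cmp_id_r : forall X Y (f : Hom X Y), cmp f (idm X) = f;
  cmp_assoc : forall X Y Z W (h : Hom Z W) (g : Hom Y Z) (f : Hom X Y),
      cmp h (cmp g f) = cmp (cmp h g) f
}.
Arguments Hom {c}.
Arguments idm {c X}.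
Arguments cmp {c X Y Z}.
Notation "g ∘ f" := (cmp g f) (at level 40, left associativity).

Definition mono (C : Cat) (X Y : C) (m : Hom X Y) :=
  forall (Z : C) (a b : Hom Z X), m ∘ a = m ∘ b -> a = b.

Definition is_iso (C : Cat) (X Y : C) (f : Hom X Y) :=
  exists g : Hom Y X, g ∘ f = idm /\ f ∘ g = idm.

(* Pullback square   A' --g--> A
                     |m'       |m
                     Q  --f--> P                                         *)
Definition is_pullback (C : Cat) (P Q A A' : C) (m : Hom A P) (f : Hom Q P)
    (m' : Hom A' Q) (g : Hom A' A) :=
  m ∘ g = f ∘ m' /\
  forall (Z : C) (x : Hom Z Q) (y : Hom Z A), f ∘ x = m ∘ y ->
    exists! u : Hom Z A', m' ∘ u = x /\ g ∘ u = y.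

Record Shape := {
  node : finType;
  arr : finType;
  asrc : arr -> node;
  atgt : arr -> node
}.

Record Diagram (C : Cat) (J : Shape) := {
  dobj : node J -> C;
  dmor : forall a : arr J, Hom (dobj (asrc a)) (dobj (atgt a))
}.

Definition is_cone (C : Cat) (J : Shape) (Dg : Diagram C J) (Z : C)
    (c : forall j, Hom Z (dobj Dg j)) :=
  forall a : arr J, dmor Dg a ∘ c (asrc a) = c (atgt a).
Arguments is_cone {C J} Dg {Z} c.

Definition is_limit (C : Cat) (J : Shape) (Dg : Diagram C J) (Z : C)
    (c : forall j, Hom Z (dobj Dg j)) :=
  is_cone Dg c /\
  forall (Z' : C) (c' : forall j, Hom Z' (dobj Dg j)), is_cone Dg c' ->
    exists! h : Hom Z' Z, forall j, c j ∘ h = c' j.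
Arguments is_limit {C J} Dg {Z} c.

Definition mapDiagram (C D : Cat) (J : Shape) (Fo : C -> D)
    (Fh : forall X Y : C, Hom X Y -> Hom (Fo X) (Fo Y)) (Dg : Diagram C J)
    : Diagram D J :=
  {| dobj := fun j => Fo (dobj Dg j); dmor := fun a => Fh _ _ (dmor Dg a) |}.
Arguments mapDiagram {C D J Fo} Fh Dg.

Record FinLimCat := {
  flc :> Cat;
  one : flc;
  bang : forall X : flc, Hom X one;
  bang_uniq : forall (X : flc) (f : Hom X one), f = bang X;
  prod : forall I : finType, (I -> flc) -> flc;
  proj : forall (I : finType) (P : I -> flc) (i : I), Hom (prod P) (P i);
  tuple : forall (I : finType) (P : I -> flc) (Z : flc),
      (forall i, Hom Z (P i)) -> Hom Z (prod P);
  proj_tuple : forall (I : finType) (P : I -> flc) Z (f : forall i, Hom Z (P i)) i,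
      @proj I P i ∘ @tuple I P Z f = f i;
  tuple_uniq : forall (I : finType) (P : I -> flc) Z (f : forall i, Hom Z (P i))
      (h : Hom Z (@prod I P)),
      (forall i, @proj I P i ∘ h = f i) -> h = @tuple I P Z f;
  bprod : flc -> flc -> flc;
  bp1 : forall X Y : flc, Hom (bprod X Y) X;
  bp2 : forall X Y : flc, Hom (bprod X Y) Y;
  bpair : forall X Y Z : flc, Hom Z X -> Hom Z Y -> Hom Z (bprod X Y);
  bp1_pair : forall X Y Z (f : Hom Z X) (g : Hom Z Y), @bp1 X Y ∘ @bpair X Y Z f g = f;
  bp2_pair : forall X Y Z (f : Hom Z X) (g : Hom Z Y), @bp2 X Y ∘ @bpair X Y Z f g = g;
  bpair_uniq : forall X Y Z (f : Hom Z X) (g : Hom Z Y) (h : Hom Z (bprod X Y)),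
      @bp1 X Y ∘ h = f -> @bp2 X Y ∘ h = g -> h = @bpair X Y Z f g;
  has_equalizers : forall (X Y : flc) (f g : Hom X Y),
      exists (Q : flc) (e : Hom Q X), f ∘ e = g ∘ e /\
        forall (Z : flc) (h : Hom Z X), f ∘ h = g ∘ h -> exists! u : Hom Z Q, e ∘ u = h
}.
Arguments one {_}.
Arguments bang {_}.
Arguments prod {_ I}.
Arguments proj {_ I P}.
Arguments tuple {_ I P Z}.
Arguments bprod {_}.
Arguments bp1 {_ X Y}.
Arguments bp2 {_ X Y}.
Arguments bpair {_ X Y Z}.

Unset Implicit Arguments.
Record LiabCat := {
  lcat :> FinLimCat;
  gle : forall P : lcat, Hom one P -> Hom one P -> Prop;
  gle_refl : forall (P : lcat) (r : Hom one P), gle P r r;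
  gle_antisym : forall (P : lcat) (r s : Hom one P), gle P r s -> gle P s r -> r = s;
  gle_trans : forall (P : lcat) (r s u : Hom one P), gle P r s -> gle P s u -> gle P r u;
  gle_post : forall (P Q : lcat) (f : Hom P Q) (r s : Hom one P),
      gle P r s -> gle Q (f ∘ r) (f ∘ s);
  (* (5) Hom(1, prod P_i) -> prod Hom(1, P_i) is an order isomorphism
     (it is a bijection by the universal property of the product; the
      order-isomorphism condition is that the order is componentwise) *)
  gle_prod : forall (I : finType) (P : I -> lcat) (r s : Hom one (prod P)),
      gle (prod P) r s <-> (forall i, gle (P i) (proj i ∘ r) (proj i ∘ s));
  gle_bprod : forall (X Y : lcat) (r s : Hom one (bprod X Y)),
      gle (bprod X Y) r s <-> (gle X (bp1 ∘ r) (bp1 ∘ s) /\ gle Y (bp2 ∘ r) (bp2 ∘ s));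
  Scls : forall P : lcat, {A : lcat & Hom A P} -> Prop;
  S_mono : forall (P : lcat) (m : {A : lcat & Hom A P}), Scls P m -> mono (projT2 m);
  (* one representative per subobject class *)
  S_rep : forall (P : lcat) (m m' : {A : lcat & Hom A P}), Scls P m -> Scls P m' ->
      (exists i : Hom (projT1 m) (projT1 m'), is_iso i /\ projT2 m' ∘ i = projT2 m) ->
      m = m';
  S_pullback : forall (P Q : lcat) (f : Hom Q P) (m : {A : lcat & Hom A P}),
      Scls P m -> exists m' : {A : lcat & Hom A Q}, Scls Q m' /\
        exists g : Hom (projT1 m') (projT1 m), is_pullback (projT2 m) f (projT2 m') g;
  beta : forall P : lcat, Hom one P -> {A : lcat & Hom A P};
  beta_S : forall (P : lcat) (r : Hom one P), Scls P (beta P r)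
}.
Set Implicit Arguments.
Arguments beta {_ P}.

Unset Implicit Arguments.
Record LMor (C D : LiabCat) := {
  Fob : C -> D;
  Fhom : forall X Y : C, Hom X Y -> Hom (Fob X) (Fob Y);
  F_id : forall X : C, Fhom X X idm = idm;
  F_cmp : forall (X Y Z : C) (g : Hom Y Z) (f : Hom X Y),
      Fhom X Z (g ∘ f) = Fhom Y Z g ∘ Fhom X Y f;
  F_lim : forall (J : Shape) (Dg : Diagram C J) (Z : C) (c : forall j, Hom Z (dobj Dg j)),
      is_limit Dg c -> is_limit (mapDiagram Fhom Dg) (fun j => Fhom Z (dobj Dg j) (c j));
  (* the canonical isomorphism tau : 1' -> F 1 (it is the unique morphism
     1' -> F 1, since F 1 is terminal by finite-limit preservation) *)
  tau : Hom (@one D) (Fob one);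
  phi : forall (X : C) (r : Hom one X),
      Hom (Fob (projT1 (beta r))) (projT1 (beta (Fhom one X r ∘ tau)));
  phi_mono : forall (X : C) (r : Hom one X), mono (phi X r);
  phi_over : forall (X : C) (r : Hom one X),
      projT2 (beta (Fhom one X r ∘ tau)) ∘ phi X r = Fhom _ X (projT2 (beta r))
}.
Set Implicit Arguments.
Arguments Fob {C D} l _.
Arguments Fhom {C D} l {X Y}.
Arguments tau {C D} l.
Arguments phi {C D} l {X}.

Definition strict (C D : LiabCat) (F : LMor C D) :=
  forall (X : C) (r : Hom one X), is_iso (phi F r).

Unset Implicit Arguments.
Record Net (C : LiabCat) (V E : finType) (s t : E -> V) := {
  nX : V -> C;
  nlam : forall e, Hom one (nX (s e));
  niota : forall v, Hom one (nX v);
  ndelta : forall e, Hom (nX (s e)) (projT1 (beta (nlam e)));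
  nahat : forall v,
      Hom (bprod (nX v) (prod (fun i : {e : E | t e == v} => projT1 (beta (nlam (val i))))))
          (nX v)
}.
Set Implicit Arguments.
Arguments Net C {V E} s t.
Arguments Build_Net {C V E s t}.
Arguments nX {C V E s t}.
Arguments nlam {C V E s t}.
Arguments niota {C V E s t}.
Arguments ndelta {C V E s t}.
Arguments nahat {C V E s t}.

Section NetDefs.
Context (C : LiabCat) (V E : finType) (s t : E -> V) (N : Net C s t).

Definition Xb (e : E) : C := projT1 (beta (nlam N e)).
Definition Pin (v : V) : C := prod (fun i : {e : E | t e == v} => Xb (val i)).

(* partial aggregator alpha_v = ahat_v o (iota_v x id), with 1 x Q identified with Q *)
Definition alpha (v : V) : Hom (Pin v) (nX N v) :=
  nahat N v ∘ bpair (niota N v ∘ bang (Pin v)) idm.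

Definition Pobj : C := prod (nX N).
Definition Bobj : C := prod Xb.
Definition Dmap : Hom Pobj Bobj := tuple (fun e => ndelta N e ∘ proj (s e)).
Definition Amap : Hom Bobj Pobj :=
  tuple (fun v => alpha v ∘ tuple (fun i : {e : E | t e == v} => proj (val i))).
Definition Phi : Hom Pobj Pobj := Amap ∘ Dmap.
End NetDefs.

(* The liability hypergraph H_G and its incidence category, presented  *)
(* by its generating graph (the incidence category has no non-identity *)
(* composites, so cones over it are exactly cones over this graph).    *)
(*  nodes:  inl (inl v) = v,   inl (inr e) = e*,                       *)
(*          inr (inl v) = h_v^delta,  inr (inr v) = h_v^alpha          *)
(*  arrows: inl (inl v) : h_v^delta -> v                               *)
(*          inl (inr e) : h_{s e}^delta -> e*                          *)
(*          inr (inl e) : h_{t e}^alpha -> e*                          *)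
(*          inr (inr v) : h_v^alpha -> v                               *)
Definition incShape (V E : finType) (s t : E -> V) : Shape :=
  {| node := ((V + E) + (V + V))%type;
     arr := ((V + E) + (E + V))%type;
     asrc := fun a => match a with
                      | inl (inl v) => inr (inl v)
                      | inl (inr e) => inr (inl (s e))
                      | inr (inl e) => inr (inr (t e))
                      | inr (inr v) => inr (inr v)
                      end;
     atgt := fun a => match a with
                      | inl (inl v) => inl (inl v)
                      | inl (inr e) => inl (inr e)
                      | inr (inl e) => inl (inr e)
                      | inr (inr v) => inl (inl v)
                      end |}.

Section Sheaf.
Context (C : LiabCat) (V E : finType) (s t : E -> V) (N : Net C s t).

Definition sheafObj (x : node (incShape s t)) : C :=
  match x with
  | inl (inl v) => nX N v
  | inl (inr e) => Xb N e
  | inr (inl v) => nX N v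
  | inr (inr v) => Pin N v
  end.

Definition sheafMor (a : arr (incShape s t)) :
    Hom (sheafObj (asrc a)) (sheafObj (atgt a)) :=
  match a as a0 return Hom (sheafObj (@asrc (incShape s t) a0)) (sheafObj (@atgt (incShape s t) a0)) with
  | inl (inl v) => idm
  | inl (inr e) => ndelta N e
  | inr (inl e) => @proj C {e' : E | t e' == t e} (fun i => Xb N (val i))
                         (exist (fun e' => t e' == t e) e (eqxx (t e)))
  | inr (inr v) => alpha N v
  end.

Definition sheaf : Diagram C (incShape s t) :=
  {| dobj := sheafObj; dmor := sheafMor |}.
End Sheaf.

Section Push.
Context (C D : LiabCat) (F : LMor C D) (V E : finType) (s t : E -> V) (N : Net C s t).

Definition pX (v : V) : D := Fob F (nX N v).
Definition plam (e : E) : Hom one (pX (s e)) := Fhom F (nlam N e) ∘ tau F.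
Definition piota (v : V) : Hom one (pX v) := Fhom F (niota N v) ∘ tau F.
Definition pdelta (e : E) : Hom (pX (s e)) (projT1 (beta (plam e))) :=
  phi F (nlam N e) ∘ Fhom F (ndelta N e).
Definition pPin (v : V) : D :=
  prod (fun i : {e : E | t e == v} => projT1 (beta (plam (val i)))).

Definition psi (v : V) : Hom (Fob F (Pin N v)) (pPin v) :=
  tuple (fun i : {e : E | t e == v} => phi F (nlam N (val i)) ∘ Fhom F (proj i)).
Definition kappa (v : V) :
    Hom (Fob F (bprod (nX N v) (Pin N v))) (bprod (pX v) (Fob F (Pin N v))) :=
  bpair (Fhom F bp1) (Fhom F bp2).

Definition pushNet (ah : forall v, Hom (bprod (pX v) (pPin v)) (pX v)) : Net D s t :=
  {| nX := pX; nlam := plam; niota := piota; ndelta := pdelta; nahat := ah |}.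

Definition gamma (ah : forall v, Hom (bprod (pX v) (pPin v)) (pX v))
    (x : node (incShape s t)) :
    Hom (Fob F (sheafObj N x)) (sheafObj (pushNet ah) x) :=
  match x as x0 return Hom (Fob F (sheafObj N x0)) (sheafObj (pushNet ah) x0) with
  | inl (inl v) => idm
  | inl (inr e) => phi F (nlam N e)
  | inr (inl v) => idm
  | inr (inr v) => psi v
  end.

Definition chiP (ah : forall v, Hom (bprod (pX v) (pPin v)) (pX v)) :
    Hom (Fob F (Pobj N)) (Pobj (pushNet ah)) :=
  tuple (fun v => Fhom F (proj v)).
End Push.

Definition bmap (C : FinLimCat) (X Y X' Y' : C) (f : Hom X X') (g : Hom Y Y') :
    Hom (bprod X Y) (bprod X' Y') :=
  bpair (f ∘ bp1) (g ∘ bp2).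

Arguments pX {C D} F {V E s t} N v.
Arguments plam {C D} F {V E s t} N e.
Arguments piota {C D} F {V E s t} N v.
Arguments pdelta {C D} F {V E s t} N e.
Arguments pPin {C D} F {V E s t} N v.
Arguments psi {C D} F {V E s t} N v.
Arguments kappa {C D} F {V E s t} N v.
Arguments pushNet {C D} F {V E s t} N ah.
Arguments gamma {C D} F {V E s t} N ah x.
Arguments chiP {C D} F {V E s t} N ah.
Arguments sheaf {C V E s t} N.
Arguments Phi {C V E s t} N.

From Pilot Require Import Defs.
From HB Require Import structures.
From mathcomp Require Import all_boot.
From Stdlib Require Import IndefiniteDescription.

Set Implicit Arguments.
Unset Strict Implicit.

(** F preserves finite limits and, F being strict, every comparison
    [phi] is invertible; hence the stalkwise comparisons [gamma] form a
    natural isomorphism between F ∘ L and the liability sheaf L' of the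
    pushforward, and F (H^0 L), a limit of F ∘ L, is isomorphic to H^0 L'.
    The clearing operators correspond because Φ = A ∘ D is assembled from
    the same projections, distributors and partial aggregators that
    [gamma] intertwines: χ_P carries D to D' and A to A' through the
    analogous comparison on B = ∏_e X_{s(e)}^{λ_e}. *)

Section Limits.
Variable C : Cat.

Lemma is_iso_idm (X : C) : is_iso (@idm C X).
Proof. by exists idm; rewrite cmp_id_l. Qed.

Lemma iso_inv (X Y : C) (f : Hom X Y) :
  is_iso f -> {g : Hom Y X | g ∘ f = idm /\ f ∘ g = idm}.
Proof. exact: constructive_indefinite_description. Qed.

Lemma limit_hom_ext (J : Shape) (Dg : Diagram C J) (Z : C)
    (c : forall j, Hom Z (dobj Dg j)) :
  is_limit Dg c ->
  forall (Z' : C) (h1 h2 : Hom Z' Z), (forall j, c j ∘ h1 = c j ∘ h2) -> h1 = h2.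
Proof.
move=> [c_cone c_univ] Z' h1 h2 eq_c.
have h1_cone : is_cone Dg (fun j => c j ∘ h1) by move=> a; rewrite cmp_assoc c_cone.
have [h [_ h_uniq]] := c_univ _ _ h1_cone.
by rewrite -(h_uniq h1) //; apply: h_uniq => j; rewrite eq_c.
Qed.

Lemma limit_iso (J : Shape) (Dg1 Dg2 : Diagram C J)
    (g : forall j, Hom (dobj Dg1 j) (dobj Dg2 j)) :
  (forall j, is_iso (g j)) ->
  (forall a, dmor Dg2 a ∘ g (asrc a) = g (atgt a) ∘ dmor Dg1 a) ->
  forall (Z1 : C) (c1 : forall j, Hom Z1 (dobj Dg1 j))
         (Z2 : C) (c2 : forall j, Hom Z2 (dobj Dg2 j)),
  is_limit Dg1 c1 -> is_limit Dg2 c2 ->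
  exists th : Hom Z1 Z2, is_iso th /\ forall j, c2 j ∘ th = g j ∘ c1 j.
Proof.
move=> g_iso g_nat Z1 c1 Z2 c2 lim1 lim2.
pose gi j := sval (iso_inv (g_iso j)).
have giK j : gi j ∘ g j = idm by rewrite /gi; case: iso_inv => ? [].
have gKi j : g j ∘ gi j = idm by rewrite /gi; case: iso_inv => ? [].
have gi_nat a : dmor Dg1 a ∘ gi (asrc a) = gi (atgt a) ∘ dmor Dg2 a.
  by rewrite -[LHS]cmp_id_l -(giK (atgt a)) -!cmp_assoc (cmp_assoc (g _))
     -g_nat -cmp_assoc gKi cmp_id_r.
have cone1 : is_cone Dg2 (fun j => g j ∘ c1 j).
  by move=> a; rewrite cmp_assoc g_nat -cmp_assoc (proj1 lim1).
have cone2 : is_cone Dg1 (fun j => gi j ∘ c2 j).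
  by move=> a; rewrite cmp_assoc gi_nat -cmp_assoc (proj1 lim2).
have [th [th_c _]] := proj2 lim2 _ _ cone1.
have [ti [ti_c _]] := proj2 lim1 _ _ cone2.
exists th; split => //; exists ti; split.
- apply: (limit_hom_ext lim1) => j.
  by rewrite cmp_id_r cmp_assoc ti_c -cmp_assoc th_c cmp_assoc giK cmp_id_l.
- apply: (limit_hom_ext lim2) => j.
  by rewrite cmp_id_r cmp_assoc th_c -cmp_assoc ti_c cmp_assoc gKi cmp_id_l.
Qed.
End Limits.

Definition discShape (I : finType) : Shape :=
  {| node := I; arr := void; asrc := fun a => match a with end;
     atgt := fun a => match a with end |}.

Definition discD (C : Cat) (I : finType) (P : I -> C) : Diagram C (discShape I) :=
  @Build_Diagram C (discShape I) P (fun a : void => match a with end).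

Section Products.
Variable C : FinLimCat.

Lemma tuple_cmp (I : finType) (P : I -> C) (Z W : C)
    (f : forall i, Hom Z (P i)) (h : Hom W Z) :
  Defs.tuple f ∘ h = Defs.tuple (fun i => f i ∘ h).
Proof. by apply: tuple_uniq => i; rewrite cmp_assoc proj_tuple. Qed.

Lemma bpair_cmp (X Y Z W : C) (f : Hom Z X) (g : Hom Z Y) (h : Hom W Z) :
  bpair f g ∘ h = bpair (f ∘ h) (g ∘ h).
Proof. by apply: bpair_uniq; rewrite cmp_assoc ?bp1_pair ?bp2_pair. Qed.

Lemma prod_hom_ext (I : finType) (P : I -> C) (Z : C) (h1 h2 : Hom Z (prod P)) :
  (forall i, proj i ∘ h1 = proj i ∘ h2) -> h1 = h2.
Proof.
by move=> eq_h; rewrite (tuple_uniq eq_h); symmetry; apply: tuple_uniq.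
Qed.

Lemma one_is_limit (Dg : Diagram C (discShape void)) :
  is_limit Dg (fun v : void => match v with end : Hom Defs.one (dobj Dg v)).
Proof.
split; first by case.
move=> Z c _; exists (bang Z); split; first by case.
by move=> h _; rewrite (bang_uniq h).
Qed.

Lemma prod_is_limit (I : finType) (Dg : Diagram C (discShape I)) :
  is_limit Dg (fun i => proj i : Hom (prod (dobj Dg)) _).
Proof.
split; first by case.
move=> Z c _; exists (Defs.tuple c); split => [i|h h_c]; first exact: proj_tuple.
by symmetry; apply: tuple_uniq.
Qed.

Lemma bprod_is_limit (Dg : Diagram C (discShape bool)) :
  is_limit Dg (fun b => if b as b0 return Hom (bprod (dobj Dg true) (dobj Dg false))
                                              (dobj Dg b0)
                        then bp1 else bp2).
Proof.
split; first by case.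
move=> Z c _; exists (bpair (c true) (c false)); split.
  by case; rewrite ?bp1_pair ?bp2_pair.
by move=> h h_c; symmetry; apply: bpair_uniq; [apply: (h_c true)|apply: (h_c false)].
Qed.

Lemma tuple_is_iso (I : finType) (Dg : Diagram C (discShape I)) (Z : C)
    (c : forall i, Hom Z (dobj Dg i)) (Q : I -> C) (f : forall i, Hom (dobj Dg i) (Q i)) :
  is_limit Dg c -> (forall i, is_iso (f i)) ->
  is_iso (Defs.tuple (fun i => f i ∘ c i)).
Proof.
move=> c_lim f_iso.
have [th [th_iso th_c]] :=
  limit_iso (Dg2 := discD Q) f_iso (fun a : void => match a with end) c_lim
    (prod_is_limit (discD Q)).
by rewrite -(tuple_uniq th_c).
Qed.

Lemma bpair_is_iso (Dg : Diagram C (discShape bool)) (Z : C)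
    (c : forall b, Hom Z (dobj Dg b)) :
  is_limit Dg c -> is_iso (bpair (c true) (c false)).
Proof.
move=> c_lim.
have [th [th_iso th_c]] :=
  limit_iso (Dg2 := Dg) (fun b => is_iso_idm (dobj Dg b))
    (fun a : void => match a with end) c_lim (bprod_is_limit Dg).
rewrite (bpair_uniq (th_c true) (th_c false)) in th_iso.
by rewrite !cmp_id_l in th_iso.
Qed.
End Products.

Section Pushforward.
Variables (C D : LiabCat) (F : LMor C D).

Lemma Fone_hom_ext (Z : D) (h1 h2 : Hom Z (Fob F Defs.one)) : h1 = h2.
Proof.
have Fone_lim := @F_lim _ _ F _ _ _ _
  (one_is_limit (C := C) (discD (fun v : void => match v with end))).
by apply: (limit_hom_ext Fone_lim); case.
Qed.

Variables (V E : finType) (s t : E -> V) (N : Net C s t).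

Lemma kappa_is_iso (v : V) : is_iso (kappa F N v).
Proof.
exact: bpair_is_iso
  (@F_lim _ _ F _ _ _ _ (bprod_is_limit (discD (fun b => if b then nX N v else Pin N v)))).
Qed.

Lemma psi_is_iso (v : V) : strict F -> is_iso (psi F N v).
Proof.
move=> F_strict.
exact: tuple_is_iso
  (@F_lim _ _ F _ _ _ _ (prod_is_limit (discD (fun i : {e | t e == v} => Xb N (val i)))))
  (fun i => F_strict _ _).
Qed.

Variable ah : forall v, Hom (bprod (pX F N v) (pPin F N v)) (pX F N v).
Hypothesis ah_def : forall v, ah v ∘ bmap idm (psi F N v) ∘ kappa F N v = Fhom F (nahat N v).

Local Notation N' := (pushNet F N ah).

Lemma push_alpha (v : V) : alpha N' v ∘ psi F N v = Fhom F (alpha N v).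
Proof.
rewrite /alpha /= -cmp_assoc bpair_cmp cmp_id_l F_cmp -ah_def -!cmp_assoc.
congr (ah v ∘ _).
rewrite /kappa /bmap !bpair_cmp -!F_cmp bp1_pair bp2_pair F_id.
rewrite -!cmp_assoc !bp1_pair !bp2_pair cmp_id_l cmp_id_r F_cmp.
(* [tau ∘ bang] and [Fhom bang] are both maps into the terminal object F 1. *)
by congr (bpair (_ ∘ _) _); apply: Fone_hom_ext.
Qed.

Lemma gamma_natural (a : arr (incShape s t)) :
  dmor (sheaf N') a ∘ gamma F N ah (asrc a) =
  gamma F N ah (atgt a) ∘ dmor (mapDiagram (@Fhom _ _ F) (sheaf N)) a.
Proof.
case: a => [[v|e]|[e|v]] /=.
- by rewrite F_id.
- by rewrite cmp_id_r.
- exact: (proj_tuple _ (exist (fun e' => t e' == t e) e (eqxx (t e)))).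
- by rewrite cmp_id_l push_alpha.
Qed.

Definition chiB : Hom (Fob F (Bobj N)) (Bobj N') :=
  Defs.tuple (fun e => phi F (nlam N e) ∘ Fhom F (proj e)).

Lemma push_Dmap : Dmap N' ∘ chiP F N ah = chiB ∘ Fhom F (Dmap N).
Proof.
apply: prod_hom_ext => e; rewrite !cmp_assoc !proj_tuple -!cmp_assoc -F_cmp proj_tuple.
by rewrite /chiP proj_tuple /= /pdelta F_cmp.
Qed.

Lemma chiB_restrict (v : V) :
  Defs.tuple (fun i : {e | t e == v} => proj (val i) ∘ chiB) =
  psi F N v ∘ Fhom F (Defs.tuple (fun i : {e | t e == v} => proj (val i))).
Proof.
apply: prod_hom_ext => i.
by rewrite cmp_assoc !proj_tuple -cmp_assoc -F_cmp proj_tuple.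
Qed.

Lemma push_Amap : Amap N' ∘ chiB = chiP F N ah ∘ Fhom F (Amap N).
Proof.
apply: prod_hom_ext => v; rewrite !cmp_assoc !proj_tuple -F_cmp proj_tuple F_cmp.
by rewrite -cmp_assoc tuple_cmp chiB_restrict cmp_assoc push_alpha.
Qed.

Lemma push_Phi : Phi N' ∘ chiP F N ah = chiP F N ah ∘ Fhom F (Phi N).
Proof. by rewrite /Phi -cmp_assoc push_Dmap cmp_assoc push_Amap -cmp_assoc -F_cmp. Qed.
End Pushforward.

Theorem mainTheorem5 (C D : LiabCat) (F : LMor C D) (V E : finType) (s t : E -> V)
    (N : Net C s t) :
  strict F ->
  (* F_* N is well defined: kappa_v and psi_v are isomorphisms *)
  (forall v, is_iso (kappa F N v) /\ is_iso (psi F N v)) /\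
  (* for the aggregators ahat'_v = F ahat_v o kappa_v^-1 o (id x psi_v^-1) *)
  forall ah : forall v, Hom (bprod (pX F N v) (pPin F N v)) (pX F N v),
    (forall v, ah v ∘ bmap idm (psi F N v) ∘ kappa F N v = Fhom F (nahat N v)) ->
    (forall (H : C) (c : forall x, Hom H (dobj (sheaf N) x))
            (H' : D) (c' : forall x, Hom H' (dobj (sheaf (pushNet F N ah)) x)),
        is_limit (sheaf N) c -> is_limit (sheaf (pushNet F N ah)) c' ->
        exists th : Hom (Fob F H) H', is_iso th /\
          forall x, c' x ∘ th = gamma F N ah x ∘ Fhom F (c x)) /\
    Phi (pushNet F N ah) ∘ chiP F N ah = chiP F N ah ∘ Fhom F (Phi N).
Proof.
move=> F_strict; split=> [v|ah ah_def].
  by split; [apply: kappa_is_iso | apply: psi_is_iso].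
split; last exact: push_Phi.
move=> H c H' c' c_lim c'_lim.
have gamma_iso x : is_iso (gamma F N ah x).
  case: x => [[v|e]|[v|v]];
    [exact: is_iso_idm | exact: F_strict | exact: is_iso_idm | exact: psi_is_iso].
exact: (limit_iso (Dg1 := mapDiagram (@Fhom _ _ F) (sheaf N))
         (Dg2 := sheaf (pushNet F N ah)) gamma_iso
         (gamma_natural ah_def) (@F_lim _ _ F _ _ _ _ c_lim) c'_lim).
Qed.
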